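(* Let $(F,\phi):\mathcal B\to\mathcal C$ be a fibration and $(G,\gamma):\mathcal D\to\mathcal C$ any morphism of bigroupoids. Then a pullback of $(F,\phi)$ along $(G,\gamma)$ exists in $\mathbf{Bigpd}$, i.e. there is a commutative square $(F,\phi)\circ(R,\rho)=(G,\gamma)\circ(P,\pi)$ with $(R,\rho):\mathcal A\to\mathcal B$, $(P,\pi):\mathcal A\to\mathcal D$ which is universal among such commutative squares; moreover the projection $(P,\pi):\mathcal A\to\mathcal D$ can be chosen strict ($\pi=\mathrm{id}$).
   Context: A bigroupoid $\mathcal B$ consists of: a set $\mathcal B_0$ of 0-cells; for each $A,B\in\mathcal B_0$ a groupoid $\mathcal B(A,B)$ whose objects are 1-cells and whose arrows are 2-cells; composition functors $*$; identity 1-cells $1_A$; inversion functors $(-)^*:\mathcal B(A,B)\to\mathcal B(B,A)$; and natural isomorphisms $\mathbf a:(h*g)*f\Rightarrow h*(g*f)$, $\mathbf l:1_B*f\Rightarrow f$, $\mathbf r:f*1_A\Rightarrow f$, $\mathbf e:f^**f\Rightarrow 1_A$, $\mathbf i:1_B\Rightarrow f*f^*$, such that the pentagon for $\mathbf a$ commutes, $(\mathrm{id}*\mathbf l)\circ\mathbf a=\mathbf r*\mathrm{id}$, and $\mathbf r_f\circ(\mathrm{id}*\mathbf e_f)\circ\mathbf a\circ(\mathbf i_f*\mathrm{id})=\mathbf l_f$. A morphism $(F,\phi):\mathcal A\to\mathcal B$ consists of a function on 0-cells, functors $F_{A,A'}:\mathcal A(A,A')\to\mathcal B(FA,FA')$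 and natural isomorphisms $\phi_{g,f}:Fg*Ff\Rightarrow F(g*f)$, $\phi_A:1_{FA}\Rightarrow F1_A$, $\phi_f:(Ff)^*\Rightarrow F(f^* )$ satisfying $F\mathbf a\circ\phi\circ(\phi*\mathrm{id})=\phi\circ(\mathrm{id}*\phi)\circ\mathbf a$, $F\mathbf r\circ\phi\circ(\mathrm{id}*\phi_A)=\mathbf r$, $F\mathbf l\circ\phi\circ(\phi_B*\mathrm{id})=\mathbf l$, $F\mathbf e\circ\phi\circ(\phi_f*\mathrm{id})=\phi_A\circ\mathbf e$, $F\mathbf i\circ\phi_B=\phi\circ(\mathrm{id}*\phi_f)\circ\mathbf i$; strict if all components of $\phi$ are identities; composition is $(G,\gamma)\circ(F,\phi)=(GF,G\phi\circ\gamma F)$, and equality of morphisms means equality of all data. $\mathbf{Bigpd}$ is the category of small bigroupoids and morphisms. Fibration: (1) for every 0-cell $A'$ of $\mathcal A$ and 1-cell $b:B\to FA'$ there is $a:A\to A'$ with $FA=B$, $Fa=b$; (2) for every 1-cell $a'$ and 2-cell $\beta:b\Rightarrow Fa'$ there is $\alpha:a\Rightarrow a'$ with $Fa=b$, $F\alpha=\beta$. *)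

From Stdlib Require Import Classical ProofIrrelevance FunctionalExtensionality.

Record BgData : Type := {
  b0 : Type;
  b1 : b0 -> b0 -> Type;
  b2 : forall x y, b1 x y -> b1 x y -> Type;
  vc : forall x y (f g h : b1 x y), b2 x y g h -> b2 x y f g -> b2 x y f h;
  vi : forall x y (f : b1 x y), b2 x y f f;
  vinv : forall x y (f g : b1 x y), b2 x y f g -> b2 x y g f;
  hc : forall x y z, b1 y z -> b1 x y -> b1 x z;
  hc2 : forall x y z (g g' : b1 y z) (f f' : b1 x y),
          b2 y z g g' -> b2 x y f f' -> b2 x z (hc x y z g f) (hc x y z g' f');
  one : forall x, b1 x x;
  inv : forall x y, b1 x y -> b1 y x;
  inv2 : forall x y (f g : b1 x y), b2 x y f g -> b2 y x (inv x y f) (inv x y g);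
  asc : forall w x y z (h : b1 y z) (g : b1 x y) (f : b1 w x),
          b2 w z (hc w x z (hc x y z h g) f) (hc w y z h (hc w x y g f));
  lu : forall x y (f : b1 x y), b2 x y (hc x y y (one y) f) f;
  ru : forall x y (f : b1 x y), b2 x y (hc x x y f (one x)) f;
  ev : forall x y (f : b1 x y), b2 x x (hc x y x (inv x y f) f) (one x);
  co : forall x y (f : b1 x y), b2 y y (one y) (hc y x y f (inv x y f))
}.

Arguments b1 {b} x y.
Arguments b2 {b x y} f g.
Arguments vc {b x y f g h} _ _.
Arguments vi {b x y} f.
Arguments vinv {b x y f g} _.
Arguments hc {b x y z} _ _.
Arguments hc2 {b x y z g g' f f'} _ _.
Arguments one {b} x.
Arguments inv {b x y} _.
Arguments inv2 {b x y f g} _.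
Arguments asc {b w x y z} h g f.
Arguments lu {b x y} f.
Arguments ru {b x y} f.
Arguments ev {b x y} f.
Arguments co {b x y} f.

Record BgLaws (B : BgData) : Prop := {
  vc_assoc : forall (x y : b0 B) (f g h k : b1 x y) (c : b2 h k) (b : b2 g h) (a : b2 f g),
      vc c (vc b a) = vc (vc c b) a;
  vc_idl : forall (x y : b0 B) (f g : b1 x y) (a : b2 f g), vc (vi g) a = a;
  vc_idr : forall (x y : b0 B) (f g : b1 x y) (a : b2 f g), vc a (vi f) = a;
  vinv_l : forall (x y : b0 B) (f g : b1 x y) (a : b2 f g), vc (vinv a) a = vi f;
  vinv_r : forall (x y : b0 B) (f g : b1 x y) (a : b2 f g), vc a (vinv a) = vi g;
  hc2_comp : forall (x y z : b0 B) (g g' g'' : b1 y z) (f f' f'' : b1 x y)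
      (b : b2 g g') (b' : b2 g' g'') (a : b2 f f') (a' : b2 f' f''),
      hc2 (vc b' b) (vc a' a) = vc (hc2 b' a') (hc2 b a);
  hc2_id : forall (x y z : b0 B) (g : b1 y z) (f : b1 x y), hc2 (vi g) (vi f) = vi (hc g f);
  inv2_comp : forall (x y : b0 B) (f g h : b1 x y) (b : b2 g h) (a : b2 f g),
      inv2 (vc b a) = vc (inv2 b) (inv2 a);
  inv2_id : forall (x y : b0 B) (f : b1 x y), inv2 (vi f) = vi (inv f);
  asc_nat : forall (w x y z : b0 B) (h h' : b1 y z) (g g' : b1 x y) (f f' : b1 w x)
      (c : b2 h h') (b : b2 g g') (a : b2 f f'),
      vc (asc h' g' f') (hc2 (hc2 c b) a) = vc (hc2 c (hc2 b a)) (asc h g f);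
  lu_nat : forall (x y : b0 B) (f f' : b1 x y) (a : b2 f f'),
      vc (lu f') (hc2 (vi (one y)) a) = vc a (lu f);
  ru_nat : forall (x y : b0 B) (f f' : b1 x y) (a : b2 f f'),
      vc (ru f') (hc2 a (vi (one x))) = vc a (ru f);
  ev_nat : forall (x y : b0 B) (f f' : b1 x y) (a : b2 f f'),
      vc (ev f') (hc2 (inv2 a) a) = ev f;
  co_nat : forall (x y : b0 B) (f f' : b1 x y) (a : b2 f f'),
      vc (hc2 a (inv2 a)) (co f) = co f';
  pentagon : forall (v w x y z : b0 B) (k : b1 y z) (h : b1 x y) (g : b1 w x) (f : b1 v w),
      vc (asc k h (hc g f)) (asc (hc k h) g f)
      = vc (hc2 (vi k) (asc h g f)) (vc (asc k (hc h g) f) (hc2 (asc k h g) (vi f)));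
  triangle : forall (x y z : b0 B) (g : b1 y z) (f : b1 x y),
      vc (hc2 (vi g) (lu f)) (asc g (one y) f) = hc2 (ru g) (vi f);
  ev_co : forall (x y : b0 B) (f : b1 x y),
      vc (ru f) (vc (hc2 (vi f) (ev f)) (vc (asc f (inv f) f) (hc2 (co f) (vi f)))) = lu f
}.

Record Bigroupoid : Type := { bdata :> BgData; blaws : BgLaws bdata }.

Record MorData (A B : BgData) : Type := {
  F0 : b0 A -> b0 B;
  F1 : forall x y, @b1 A x y -> @b1 B (F0 x) (F0 y);
  F2 : forall x y (f g : @b1 A x y), b2 f g -> b2 (F1 x y f) (F1 x y g);
  ph2 : forall x y z (g : @b1 A y z) (f : @b1 A x y),
      b2 (hc (F1 y z g) (F1 x y f)) (F1 x z (hc g f));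
  ph0 : forall x, b2 (one (F0 x)) (F1 x x (one x));
  ph1 : forall x y (f : @b1 A x y), b2 (inv (F1 x y f)) (F1 y x (inv f))
}.

Arguments F0 {A B} _ _.
Arguments F1 {A B} _ {x y} _.
Arguments F2 {A B} _ {x y f g} _.
Arguments ph2 {A B} _ {x y z} g f.
Arguments ph0 {A B} _ x.
Arguments ph1 {A B} _ {x y} f.

Record MorLaws {A B : BgData} (F : MorData A B) : Prop := {
  F2_comp : forall x y (f g h : @b1 A x y) (b : b2 g h) (a : b2 f g),
      F2 F (vc b a) = vc (F2 F b) (F2 F a);
  F2_id : forall x y (f : @b1 A x y), F2 F (vi f) = vi (F1 F f);
  ph2_nat : forall x y z (g g' : @b1 A y z) (f f' : @b1 A x y) (b : b2 g g') (a : b2 f f'),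
      vc (F2 F (hc2 b a)) (ph2 F g f) = vc (ph2 F g' f') (hc2 (F2 F b) (F2 F a));
  ph1_nat : forall x y (f f' : @b1 A x y) (a : b2 f f'),
      vc (F2 F (inv2 a)) (ph1 F f) = vc (ph1 F f') (inv2 (F2 F a));
  mor_asc : forall w x y z (h : @b1 A y z) (g : @b1 A x y) (f : @b1 A w x),
      vc (F2 F (asc h g f)) (vc (ph2 F (hc h g) f) (hc2 (ph2 F h g) (vi (F1 F f))))
      = vc (ph2 F h (hc g f)) (vc (hc2 (vi (F1 F h)) (ph2 F g f)) (asc (F1 F h) (F1 F g) (F1 F f)));
  mor_ru : forall x y (f : @b1 A x y),
      vc (F2 F (ru f)) (vc (ph2 F f (one x)) (hc2 (vi (F1 F f)) (ph0 F x))) = ru (F1 F f);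
  mor_lu : forall x y (f : @b1 A x y),
      vc (F2 F (lu f)) (vc (ph2 F (one y) f) (hc2 (ph0 F y) (vi (F1 F f)))) = lu (F1 F f);
  mor_ev : forall x y (f : @b1 A x y),
      vc (F2 F (ev f)) (vc (ph2 F (inv f) f) (hc2 (ph1 F f) (vi (F1 F f))))
      = vc (ph0 F x) (ev (F1 F f));
  mor_co : forall x y (f : @b1 A x y),
      vc (F2 F (co f)) (ph0 F y)
      = vc (ph2 F f (inv f)) (vc (hc2 (vi (F1 F f)) (ph1 F f)) (co (F1 F f)))
}.

Definition mcomp {A B C : BgData} (G : MorData B C) (F : MorData A B) : MorData A C :=
  {| F0 := fun x => F0 G (F0 F x);
     F1 := fun x y f => F1 G (F1 F f);
     F2 := fun x y f g a => F2 G (F2 F a);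
     ph2 := fun x y z g f => vc (F2 G (ph2 F g f)) (ph2 G (F1 F g) (F1 F f));
     ph0 := fun x => vc (F2 G (ph0 F x)) (ph0 G (F0 F x));
     ph1 := fun x y f => vc (F2 G (ph1 F f)) (ph1 G (F1 F f)) |}.

Definition is_id {B : BgData} {x y} {f g : @b1 B x y} (c : b2 f g) : Prop :=
  exists p : f = g, c = eq_rect f (fun g' => b2 f g') (vi f) g p.

Definition strict {A B : BgData} (F : MorData A B) : Prop :=
  (forall x y z (g : @b1 A y z) (f : @b1 A x y), is_id (ph2 F g f)) /\
  (forall x, is_id (ph0 F x)) /\
  (forall x y (f : @b1 A x y), is_id (ph1 F f)).

Definition is_fibration {A B : BgData} (F : MorData A B) : Prop :=
  (forall (A' : b0 A) (Bo : b0 B) (b : @b1 B Bo (F0 F A')),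
      exists (Ao : b0 A) (a : @b1 A Ao A') (p : F0 F Ao = Bo),
        eq_rect (F0 F Ao) (fun X => @b1 B X (F0 F A')) (F1 F a) Bo p = b) /\
  (forall x y (a' : @b1 A x y) (b : @b1 B (F0 F x) (F0 F y)) (beta : b2 b (F1 F a')),
      exists (a : @b1 A x y) (p : F1 F a = b) (alpha : b2 a a'),
        eq_rect (F1 F a) (fun u => b2 u (F1 F a')) (F2 F alpha) b p = beta).

(* The pullback is carved out of the product B x D as the sub-bigroupoid on which
   F o pr1 and G o pr2 agree strictly.  As it stands this is not closed under
   composition, units and inverses, because the coherence cells of F and of G differ.
   Using the 2-cell lifting property of the fibration F, we first replace the chosen
   composites, units and inverses of B inside B x D by isomorphic 1-cells on which the
   coherence cells of F become those of G; transporting the bigroupoid structure along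
   these isomorphisms, the strict equalizer becomes a sub-bigroupoid.  Its second
   projection is strict because the D-components were left untouched, and the
   universal property is inherited from those of the product and of the equalizer. *)

From Stdlib Require Import Classical ProofIrrelevance FunctionalExtensionality ClassicalEpsilon Eqdep.

Existing Class BgLaws.
Existing Class MorLaws.

Section Groupoid.
Context {X : BgData} `{L : BgLaws X}.

Lemma vcA {x y : b0 X} {f g h k : b1 x y} (c : b2 h k) (b : b2 g h) (a : b2 f g) :
  vc c (vc b a) = vc (vc c b) a.
Proof. apply (vc_assoc _ L). Qed.
Lemma vc1l {x y : b0 X} {f g : b1 x y} (a : b2 f g) : vc (vi g) a = a.
Proof. apply (vc_idl _ L). Qed.
Lemma vc1r {x y : b0 X} {f g : b1 x y} (a : b2 f g) : vc a (vi f) = a.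
Proof. apply (vc_idr _ L). Qed.
Lemma vcVl {x y : b0 X} {f g : b1 x y} (a : b2 f g) : vc (vinv a) a = vi f.
Proof. apply (vinv_l _ L). Qed.
Lemma vcVr {x y : b0 X} {f g : b1 x y} (a : b2 f g) : vc a (vinv a) = vi g.
Proof. apply (vinv_r _ L). Qed.
Lemma vcVK {x y : b0 X} {f g h : b1 x y} (a : b2 f g) (c : b2 h f) : vc (vinv a) (vc a c) = c.
Proof. rewrite vcA, vcVl, vc1l. reflexivity. Qed.
Lemma vcKV {x y : b0 X} {f g h : b1 x y} (a : b2 f g) (c : b2 h g) : vc a (vc (vinv a) c) = c.
Proof. rewrite vcA, vcVr, vc1l. reflexivity. Qed.

Lemma vinv_uniq {x y : b0 X} {f g : b1 x y} (a : b2 f g) (b : b2 g f) :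
  vc b a = vi f -> b = vinv a.
Proof. intro E. rewrite <- (vc1r b), <- (vcVr a), vcA, E, vc1l. reflexivity. Qed.
Lemma vinvK {x y : b0 X} {f g : b1 x y} (a : b2 f g) : vinv (vinv a) = a.
Proof. symmetry. apply vinv_uniq, vcVr. Qed.
Lemma vinv1 {x y : b0 X} (f : b1 x y) : vinv (vi f) = vi f.
Proof. symmetry. apply vinv_uniq, vc1l. Qed.
Lemma vinv_vc {x y : b0 X} {f g h : b1 x y} (b : b2 g h) (a : b2 f g) :
  vinv (vc b a) = vc (vinv a) (vinv b).
Proof. symmetry. apply vinv_uniq. rewrite vcA, <- (vcA (vinv a)), vcVl, vc1r, vcVl. reflexivity. Qed.
Lemma vc_cancel_r {x y : b0 X} {f g h : b1 x y} (a : b2 f g) (c d : b2 g h) :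
  vc c a = vc d a -> c = d.
Proof. intro E. rewrite <- (vc1r c), <- (vcVr a), vcA, E, <- vcA, vcVr, vc1r. reflexivity. Qed.

Lemma hc2_vc {x y z : b0 X} {g g' g'' : b1 y z} {f f' f'' : b1 x y}
  (b : b2 g g') (b' : b2 g' g'') (a : b2 f f') (a' : b2 f' f'') :
  hc2 (vc b' b) (vc a' a) = vc (hc2 b' a') (hc2 b a).
Proof. apply (hc2_comp _ L). Qed.
Lemma hc2_1 {x y z : b0 X} (g : b1 y z) (f : b1 x y) : hc2 (vi g) (vi f) = vi (hc g f).
Proof. apply (hc2_id _ L). Qed.
Lemma inv2_vc {x y : b0 X} {f g h : b1 x y} (b : b2 g h) (a : b2 f g) :
  inv2 (vc b a) = vc (inv2 b) (inv2 a).
Proof. apply (inv2_comp _ L). Qed.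
Lemma inv2_1 {x y : b0 X} (f : b1 x y) : inv2 (vi f) = vi (inv f).
Proof. apply (inv2_id _ L). Qed.

Lemma hc2_vcl {x y z : b0 X} {g g' g'' : b1 y z} {f f' : b1 x y}
  (b : b2 g g') (b' : b2 g' g'') (a : b2 f f') :
  hc2 (vc b' b) a = vc (hc2 b' a) (hc2 b (vi f)).
Proof. rewrite <- hc2_vc, vc1r. reflexivity. Qed.
Lemma hc2_vcr {x y z : b0 X} {g g' : b1 y z} {f f' f'' : b1 x y}
  (b : b2 g g') (a : b2 f f') (a' : b2 f' f'') :
  hc2 b (vc a' a) = vc (hc2 b a') (hc2 (vi g) a).
Proof. rewrite <- hc2_vc, vc1r. reflexivity. Qed.
Lemma hc2_vcr' {x y z : b0 X} {g g' : b1 y z} {f f' f'' : b1 x y}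
  (b : b2 g g') (a : b2 f f') (a' : b2 f' f'') :
  hc2 b (vc a' a) = vc (hc2 (vi g') a') (hc2 b a).
Proof. rewrite <- hc2_vc, vc1l. reflexivity. Qed.
Lemma hc2_split {x y z : b0 X} {g g' : b1 y z} {f f' : b1 x y} (b : b2 g g') (a : b2 f f') :
  hc2 b a = vc (hc2 (vi g') a) (hc2 b (vi f)).
Proof. rewrite <- hc2_vc, vc1l, vc1r. reflexivity. Qed.
Lemma hc2_split' {x y z : b0 X} {g g' : b1 y z} {f f' : b1 x y} (b : b2 g g') (a : b2 f f') :
  hc2 b a = vc (hc2 b (vi f')) (hc2 (vi g) a).
Proof. rewrite <- hc2_vc, vc1l, vc1r. reflexivity. Qed.
Lemma whisker_comm {x y z : b0 X} {g g' : b1 y z} {f f' : b1 x y} (b : b2 g g') (a : b2 f f') :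
  vc (hc2 b (vi f')) (hc2 (vi g) a) = vc (hc2 (vi g') a) (hc2 b (vi f)).
Proof. rewrite <- !hc2_split, <- hc2_split'. reflexivity. Qed.
Lemma vc_hc2_merge {x y z : b0 X} {g g' g'' : b1 y z} {f f' f'' : b1 x y} {k : b1 x z}
  (b : b2 g g') (b' : b2 g' g'') (a : b2 f f') (a' : b2 f' f'') (c : b2 k (hc g f)) :
  vc (hc2 b' a') (vc (hc2 b a) c) = vc (hc2 (vc b' b) (vc a' a)) c.
Proof. rewrite vcA, hc2_vc. reflexivity. Qed.

Lemma asc_natural {w x y z : b0 X} {h h' : b1 y z} {g g' : b1 x y} {f f' : b1 w x}
  (c : b2 h h') (b : b2 g g') (a : b2 f f') :
  vc (asc h' g' f') (hc2 (hc2 c b) a) = vc (hc2 c (hc2 b a)) (asc h g f).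
Proof. apply (asc_nat _ L). Qed.
Lemma asc_natural_vc {w x y z : b0 X} {h h' : b1 y z} {g g' : b1 x y} {f f' : b1 w x} {k}
  (c : b2 h h') (b : b2 g g') (a : b2 f f') (d : b2 k _) :
  vc (asc h' g' f') (vc (hc2 (hc2 c b) a) d) = vc (hc2 c (hc2 b a)) (vc (asc h g f) d).
Proof. rewrite !vcA, asc_natural. reflexivity. Qed.
Lemma lu_natural {x y : b0 X} {f f' : b1 x y} (a : b2 f f') :
  vc (lu f') (hc2 (vi (one y)) a) = vc a (lu f).
Proof. apply (lu_nat _ L). Qed.
Lemma ru_natural {x y : b0 X} {f f' : b1 x y} (a : b2 f f') :
  vc (ru f') (hc2 a (vi (one x))) = vc a (ru f).
Proof. apply (ru_nat _ L). Qed.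
Lemma ev_natural {x y : b0 X} {f f' : b1 x y} (a : b2 f f') : vc (ev f') (hc2 (inv2 a) a) = ev f.
Proof. apply (ev_nat _ L). Qed.
Lemma co_natural {x y : b0 X} {f f' : b1 x y} (a : b2 f f') : vc (hc2 a (inv2 a)) (co f) = co f'.
Proof. apply (co_nat _ L). Qed.

Lemma vc_rw22 {x y : b0 X} {e f g g' h : b1 x y} (p : b2 g h) (q : b2 f g) (r : b2 g' h)
  (s : b2 f g') (E : vc p q = vc r s) (d : b2 e f) : vc p (vc q d) = vc r (vc s d).
Proof. rewrite !vcA, E. reflexivity. Qed.
Lemma vc_rw21 {x y : b0 X} {e f g h : b1 x y} (p : b2 g h) (q : b2 f g) (r : b2 f h)
  (E : vc p q = r) (d : b2 e f) : vc p (vc q d) = vc r d.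
Proof. rewrite vcA, E. reflexivity. Qed.
Lemma vc_rw31 {x y : b0 X} {e f g h k : b1 x y} (p : b2 h k) (q : b2 g h) (r : b2 f g)
  (s : b2 f k) (E : vc p (vc q r) = s) (d : b2 e f) : vc p (vc q (vc r d)) = vc s d.
Proof. rewrite <- E, !vcA. reflexivity. Qed.

End Groupoid.

Ltac vsimp := repeat (rewrite <- vcA || rewrite vcVK || rewrite vcKV || rewrite vcVl
  || rewrite vcVr || rewrite vc1l || rewrite vc1r || rewrite vinvK || rewrite vinv1).

Section MorphismCalculus.
Context {A B : BgData} `{LA : BgLaws A} `{LB : BgLaws B} (M : MorData A B) `{LM : MorLaws A B M}.

Lemma F2_vc {x y : b0 A} {f g h : b1 x y} (b : b2 g h) (a : b2 f g) :
  F2 M (vc b a) = vc (F2 M b) (F2 M a).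
Proof. apply (F2_comp _ LM). Qed.
Lemma F2_1 {x y : b0 A} (f : b1 x y) : F2 M (vi f) = vi (F1 M f).
Proof. apply (F2_id _ LM). Qed.
Lemma F2_vinv {x y : b0 A} {f g : b1 x y} (a : b2 f g) : F2 M (vinv a) = vinv (F2 M a).
Proof. apply vinv_uniq. rewrite <- F2_vc, vcVl, F2_1. reflexivity. Qed.
Lemma ph2_natural {x y z : b0 A} {g g' : b1 y z} {f f' : b1 x y} (b : b2 g g') (a : b2 f f') :
  vc (F2 M (hc2 b a)) (ph2 M g f) = vc (ph2 M g' f') (hc2 (F2 M b) (F2 M a)).
Proof. apply (ph2_nat _ LM). Qed.
Lemma ph1_natural {x y : b0 A} {f f' : b1 x y} (a : b2 f f') :
  vc (F2 M (inv2 a)) (ph1 M f) = vc (ph1 M f') (inv2 (F2 M a)).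
Proof. apply (ph1_nat _ LM). Qed.

Lemma F2_hc2 {x y z : b0 A} {g g' : b1 y z} {f f' : b1 x y} (b : b2 g g') (a : b2 f f') :
  F2 M (hc2 b a) = vc (ph2 M g' f') (vc (hc2 (F2 M b) (F2 M a)) (vinv (ph2 M g f))).
Proof. apply (vc_cancel_r (ph2 M g f)). rewrite ph2_natural. vsimp. reflexivity. Qed.
Lemma F2_inv2 {x y : b0 A} {f f' : b1 x y} (a : b2 f f') :
  F2 M (inv2 a) = vc (ph1 M f') (vc (inv2 (F2 M a)) (vinv (ph1 M f))).
Proof. apply (vc_cancel_r (ph1 M f)). rewrite ph1_natural. vsimp. reflexivity. Qed.
Lemma F2_asc {w x y z : b0 A} (h : b1 y z) (g : b1 x y) (f : b1 w x) :
  F2 M (asc h g f) = vc (ph2 M h (hc g f)) (vc (hc2 (vi (F1 M h)) (ph2 M g f)) (vc (asc _ _ _)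
     (vc (vinv (hc2 (ph2 M h g) (vi (F1 M f)))) (vinv (ph2 M (hc h g) f))))).
Proof.
  apply (vc_cancel_r (vc (ph2 M (hc h g) f) (hc2 (ph2 M h g) (vi (F1 M f))))).
  rewrite (mor_asc _ LM), ?vinv_vc. vsimp. reflexivity.
Qed.
Lemma F2_lu {x y : b0 A} (f : b1 x y) :
  F2 M (lu f) = vc (lu _) (vc (vinv (hc2 (ph0 M y) (vi (F1 M f)))) (vinv (ph2 M (one y) f))).
Proof.
  apply (vc_cancel_r (vc (ph2 M (one y) f) (hc2 (ph0 M y) (vi (F1 M f))))).
  rewrite (mor_lu _ LM), ?vinv_vc. vsimp. reflexivity.
Qed.
Lemma F2_ru {x y : b0 A} (f : b1 x y) :
  F2 M (ru f) = vc (ru _) (vc (vinv (hc2 (vi (F1 M f)) (ph0 M x))) (vinv (ph2 M f (one x)))).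
Proof.
  apply (vc_cancel_r (vc (ph2 M f (one x)) (hc2 (vi (F1 M f)) (ph0 M x)))).
  rewrite (mor_ru _ LM), ?vinv_vc. vsimp. reflexivity.
Qed.
Lemma F2_ev {x y : b0 A} (f : b1 x y) :
  F2 M (ev f) = vc (ph0 M x)
    (vc (ev _) (vc (vinv (hc2 (ph1 M f) (vi (F1 M f)))) (vinv (ph2 M (inv f) f)))).
Proof.
  apply (vc_cancel_r (vc (ph2 M (inv f) f) (hc2 (ph1 M f) (vi (F1 M f))))).
  rewrite (mor_ev _ LM), ?vinv_vc. vsimp. reflexivity.
Qed.
Lemma F2_co {x y : b0 A} (f : b1 x y) :
  F2 M (co f) = vc (ph2 M f (inv f)) (vc (hc2 (vi (F1 M f)) (ph1 M f)) (vc (co _) (vinv (ph0 M y)))).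
Proof. apply (vc_cancel_r (ph0 M y)). rewrite (mor_co _ LM). vsimp. reflexivity. Qed.

End MorphismCalculus.

(* Equality of cells whose boundaries are only propositionally equal, stated in the
   total space of cells; it is how the components of [mcomp F R] and [mcomp G P] compare. *)
Definition heq1 {X : BgData} {x y x' y' : b0 X} (u : b1 x y) (v : b1 x' y') : Prop :=
  existT (fun p : b0 X * b0 X => b1 (fst p) (snd p)) (x, y) u = existT _ (x', y') v.

Definition parallel_pairs (X : BgData) :=
  {p : b0 X * b0 X & (b1 (fst p) (snd p) * b1 (fst p) (snd p))%type}.

Definition heq2 {X : BgData} {x y x' y' : b0 X} {f g : b1 x y} {f' g' : b1 x' y'}
  (a : b2 f g) (a' : b2 f' g') : Prop :=
  existT (fun s : parallel_pairs X => b2 (fst (projT2 s)) (snd (projT2 s)))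
    (existT _ (x, y) (f, g)) a = existT _ (existT _ (x', y') (f', g')) a'.

Ltac destruct_heq1 H :=
  let e := fresh "e" in
  pose proof (f_equal (@projT1 _ _) H) as e; simpl in e;
  first [injection e; clear e; intros; subst | clear e];
  apply inj_pair2 in H; subst.

Ltac destruct_heq2 H :=
  let e := fresh "e" in let e' := fresh "e" in
  pose proof (f_equal (@projT1 _ _) H) as e; simpl in e;
  pose proof (f_equal (@projT1 _ _) e) as e'; simpl in e';
  first [injection e'; clear e'; intros; subst | clear e'];
  apply inj_pair2 in e; first [injection e; clear e; intros; subst | clear e];
  apply inj_pair2 in H; subst.

Section HeterogeneousEquality.
Context {X : BgData}.

Lemma heq1_eq {x y : b0 X} (u v : b1 x y) : heq1 u v -> u = v.
Proof. intro H. destruct_heq1 H. reflexivity. Qed.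
Lemma heq2_eq {x y : b0 X} {f g : b1 x y} (a a' : b2 f g) : heq2 a a' -> a = a'.
Proof. intro H. destruct_heq2 H. reflexivity. Qed.
Lemma eq_heq2 {x y : b0 X} {f g : b1 x y} (a a' : b2 f g) : a = a' -> heq2 a a'.
Proof. intros ->. reflexivity. Qed.
Lemma heq2_rw {x y x' y' : b0 X} {f g : b1 x y} {f' g' : b1 x' y'} (a : b2 f g) (a' a'' : b2 f' g') :
  heq2 a a' -> a' = a'' -> heq2 a a''.
Proof. intros H <-. exact H. Qed.
Lemma heq2_tgt {x y x' y' : b0 X} {f g : b1 x y} {f' g' : b1 x' y'} (a : b2 f g) (a' : b2 f' g') :
  heq2 a a' -> heq1 g g'.
Proof. intro H. destruct_heq2 H. reflexivity. Qed.
Lemma heq1_src {x y x' y' : b0 X} (u : b1 x y) (v : b1 x' y') : heq1 u v -> x = x'.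
Proof. intro H. destruct_heq1 H. reflexivity. Qed.
Lemma heq1_tgt {x y x' y' : b0 X} (u : b1 x y) (v : b1 x' y') : heq1 u v -> y = y'.
Proof. intro H. destruct_heq1 H. reflexivity. Qed.

Lemma heq2_vc {x y x' y' : b0 X} {f g h : b1 x y} {f' g' h' : b1 x' y'}
  (b : b2 g h) (a : b2 f g) (b' : b2 g' h') (a' : b2 f' g') :
  heq2 b b' -> heq2 a a' -> heq2 (vc b a) (vc b' a').
Proof. intros H1 H2. destruct_heq2 H2. destruct_heq2 H1. reflexivity. Qed.
Lemma heq2_vi {x y x' y' : b0 X} (f : b1 x y) (f' : b1 x' y') : heq1 f f' -> heq2 (vi f) (vi f').
Proof. intro H. destruct_heq1 H. reflexivity. Qed.
Lemma heq2_vinv {x y x' y' : b0 X} {f g : b1 x y} {f' g' : b1 x' y'} (a : b2 f g) (a' : b2 f' g') :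
  heq2 a a' -> heq2 (vinv a) (vinv a').
Proof. intro H. destruct_heq2 H. reflexivity. Qed.
Lemma heq1_hc {x y z x' y' z' : b0 X} (g : b1 y z) (f : b1 x y) (g' : b1 y' z') (f' : b1 x' y') :
  heq1 g g' -> heq1 f f' -> heq1 (hc g f) (hc g' f').
Proof. intros H1 H2. destruct_heq1 H2. destruct_heq1 H1. reflexivity. Qed.
Lemma heq2_hc2 {x y z x' y' z' : b0 X} {g1 g2 : b1 y z} {f1 f2 : b1 x y}
  {g1' g2' : b1 y' z'} {f1' f2' : b1 x' y'}
  (b : b2 g1 g2) (a : b2 f1 f2) (b' : b2 g1' g2') (a' : b2 f1' f2') :
  heq2 b b' -> heq2 a a' -> heq2 (hc2 b a) (hc2 b' a').
Proof. intros H1 H2. destruct_heq2 H2. destruct_heq2 H1. reflexivity. Qed.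
Lemma heq1_one (x x' : b0 X) : x = x' -> heq1 (one x) (one x').
Proof. intros ->. reflexivity. Qed.
Lemma heq1_inv {x y x' y' : b0 X} (f : b1 x y) (f' : b1 x' y') : heq1 f f' -> heq1 (inv f) (inv f').
Proof. intro H. destruct_heq1 H. reflexivity. Qed.
Lemma heq2_inv2 {x y x' y' : b0 X} {f g : b1 x y} {f' g' : b1 x' y'} (a : b2 f g) (a' : b2 f' g') :
  heq2 a a' -> heq2 (inv2 a) (inv2 a').
Proof. intro H. destruct_heq2 H. reflexivity. Qed.
Lemma heq2_asc {w x y z w' x' y' z' : b0 X} (h : b1 y z) (g : b1 x y) (f : b1 w x)
  (h' : b1 y' z') (g' : b1 x' y') (f' : b1 w' x') :
  heq1 h h' -> heq1 g g' -> heq1 f f' -> heq2 (asc h g f) (asc h' g' f').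
Proof. intros H1 H2 H3. destruct_heq1 H3. destruct_heq1 H2. destruct_heq1 H1. reflexivity. Qed.
Lemma heq2_lu {x y x' y' : b0 X} (f : b1 x y) (f' : b1 x' y') : heq1 f f' -> heq2 (lu f) (lu f').
Proof. intro H. destruct_heq1 H. reflexivity. Qed.
Lemma heq2_ru {x y x' y' : b0 X} (f : b1 x y) (f' : b1 x' y') : heq1 f f' -> heq2 (ru f) (ru f').
Proof. intro H. destruct_heq1 H. reflexivity. Qed.
Lemma heq2_ev {x y x' y' : b0 X} (f : b1 x y) (f' : b1 x' y') : heq1 f f' -> heq2 (ev f) (ev f').
Proof. intro H. destruct_heq1 H. reflexivity. Qed.
Lemma heq2_co {x y x' y' : b0 X} (f : b1 x y) (f' : b1 x' y') : heq1 f f' -> heq2 (co f) (co f').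
Proof. intro H. destruct_heq1 H. reflexivity. Qed.

Lemma heq2_vc_vinv `{L : BgLaws X} {x y x' y' : b0 X} {s t u v : b1 x y} {s' u' v' : b1 x' y'}
  (a : b2 s t) (b : b2 t u) (c : b2 t v) (p : b2 s' u') (q : b2 s' v') :
  heq2 (vc b a) p -> heq2 (vc c a) q -> heq2 (vc b (vinv c)) (vc p (vinv q)).
Proof.
  intros Hp Hq.
  replace (vc b (vinv c)) with (vc (vc b a) (vinv (vc c a))) by (rewrite vinv_vc; vsimp; reflexivity).
  apply heq2_vc; [exact Hp | apply heq2_vinv; exact Hq].
Qed.

End HeterogeneousEquality.

Lemma mor_ext {A B : BgData} (M N : MorData A B) :
  (forall x, F0 M x = F0 N x) ->
  (forall x y (f : b1 x y), heq1 (F1 M f) (F1 N f)) ->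
  (forall x y (f g : b1 x y) (a : b2 f g), heq2 (F2 M a) (F2 N a)) ->
  (forall x y z (g : b1 y z) (f : b1 x y), heq2 (ph2 M g f) (ph2 N g f)) ->
  (forall x, heq2 (ph0 M x) (ph0 N x)) ->
  (forall x y (f : b1 x y), heq2 (ph1 M f) (ph1 N f)) -> M = N.
Proof.
  destruct M as [m0 m1 m2 p2 p0 p1], N as [n0 n1 n2 q2 q0 q1]; simpl; intros E0 E1 E2 E3 E4 E5.
  assert (m0 = n0) by (extensionality x; apply E0). subst n0.
  assert (m1 = n1). { extensionality x; extensionality y; extensionality f. apply heq1_eq, E1. }
  subst n1.
  assert (m2 = n2).
  { extensionality x; extensionality y; extensionality f; extensionality g; extensionality a.
    apply heq2_eq, E2. }
  subst n2.
  assert (p2 = q2).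
  { extensionality x; extensionality y; extensionality z; extensionality g; extensionality f.
    apply heq2_eq, E3. }
  subst q2.
  assert (p0 = q0). { extensionality x. apply heq2_eq, E4. } subst q0.
  assert (p1 = q1). { extensionality x; extensionality y; extensionality f. apply heq2_eq, E5. }
  subst q1.
  reflexivity.
Qed.

Lemma sig_ext {T : Type} {P : T -> Prop} (s t : sig P) : proj1_sig s = proj1_sig t -> s = t.
Proof. destruct s, t; simpl; intros; apply subset_eq_compat; assumption. Qed.

Lemma mor_eq_heq {A B : BgData} (M N : MorData A B) : M = N ->
  (forall x, F0 M x = F0 N x) /\
  (forall x y (f : b1 x y), heq1 (F1 M f) (F1 N f)) /\
  (forall x y (f g : b1 x y) (a : b2 f g), heq2 (F2 M a) (F2 N a)) /\
  (forall x y z (g : b1 y z) (f : b1 x y), heq2 (ph2 M g f) (ph2 N g f)) /\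
  (forall x, heq2 (ph0 M x) (ph0 N x)) /\
  (forall x y (f : b1 x y), heq2 (ph1 M f) (ph1 N f)).
Proof. intros <-; repeat split; reflexivity. Qed.

Section Transport.
Context {X : BgData}.
Variable comp' : forall x y z : b0 X, b1 y z -> b1 x y -> b1 x z.
Variable comp_iso : forall (x y z : b0 X) (g : b1 y z) (f : b1 x y), b2 (hc g f) (comp' x y z g f).
Variable one' : forall x : b0 X, b1 x x.
Variable one_iso : forall x : b0 X, b2 (one x) (one' x).
Variable inv' : forall x y : b0 X, b1 x y -> b1 y x.
Variable inv_iso : forall (x y : b0 X) (f : b1 x y), b2 (inv f) (inv' x y f).

Definition tr_hc2 {x y z : b0 X} {g g' : b1 y z} {f f' : b1 x y} (b : b2 g g') (a : b2 f f')
  : b2 (comp' _ _ _ g f) (comp' _ _ _ g' f') :=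
  vc (comp_iso _ _ _ g' f') (vc (hc2 b a) (vinv (comp_iso _ _ _ g f))).
Definition tr_inv2 {x y : b0 X} {f g : b1 x y} (a : b2 f g) : b2 (inv' _ _ f) (inv' _ _ g) :=
  vc (inv_iso _ _ g) (vc (inv2 a) (vinv (inv_iso _ _ f))).
Definition tr_asc {w x y z : b0 X} (h : b1 y z) (g : b1 x y) (f : b1 w x)
  : b2 (comp' _ _ _ (comp' _ _ _ h g) f) (comp' _ _ _ h (comp' _ _ _ g f)) :=
  vc (comp_iso _ _ _ h (comp' _ _ _ g f)) (vc (hc2 (vi h) (comp_iso _ _ _ g f)) (vc (asc h g f)
    (vc (hc2 (vinv (comp_iso _ _ _ h g)) (vi f)) (vinv (comp_iso _ _ _ (comp' _ _ _ h g) f))))).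
Definition tr_lu {x y : b0 X} (f : b1 x y) : b2 (comp' _ _ _ (one' y) f) f :=
  vc (lu f) (vc (hc2 (vinv (one_iso y)) (vi f)) (vinv (comp_iso _ _ _ (one' y) f))).
Definition tr_ru {x y : b0 X} (f : b1 x y) : b2 (comp' _ _ _ f (one' x)) f :=
  vc (ru f) (vc (hc2 (vi f) (vinv (one_iso x))) (vinv (comp_iso _ _ _ f (one' x)))).
Definition tr_ev {x y : b0 X} (f : b1 x y) : b2 (comp' _ _ _ (inv' _ _ f) f) (one' x) :=
  vc (one_iso x) (vc (ev f)
    (vc (hc2 (vinv (inv_iso _ _ f)) (vi f)) (vinv (comp_iso _ _ _ (inv' _ _ f) f)))).
Definition tr_co {x y : b0 X} (f : b1 x y) : b2 (one' y) (comp' _ _ _ f (inv' _ _ f)) :=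
  vc (comp_iso _ _ _ f (inv' _ _ f)) (vc (hc2 (vi f) (inv_iso _ _ f)) (vc (co f) (vinv (one_iso y)))).

Definition transport_bg : BgData :=
  Build_BgData (b0 X) (@b1 X) (@b2 X) (@vc X) (@vi X) (@vinv X) comp'
    (fun x y z g g' f f' b a => tr_hc2 b a) one' inv'
    (fun x y f g a => tr_inv2 a)
    (fun w x y z h g f => tr_asc h g f)
    (fun x y f => tr_lu f) (fun x y f => tr_ru f) (fun x y f => tr_ev f) (fun x y f => tr_co f).

Context `{L : BgLaws X}.

Lemma tr_asc_natural (w x y z : b0 X) (h h' : b1 y z) (g g' : b1 x y) (f f' : b1 w x)
  (c : b2 h h') (b : b2 g g') (a : b2 f f') :
  vc (tr_asc h' g' f') (tr_hc2 (tr_hc2 c b) a) = vc (tr_hc2 c (tr_hc2 b a)) (tr_asc h g f).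
Proof.
  unfold tr_hc2, tr_asc. vsimp.
  rewrite vc_hc2_merge. vsimp. rewrite hc2_vcl. vsimp.
  rewrite asc_natural_vc, vc_hc2_merge. vsimp. rewrite vc_hc2_merge. vsimp. reflexivity.
Qed.

Lemma tr_triangle (x y z : b0 X) (g : b1 y z) (f : b1 x y) :
  vc (tr_hc2 (vi g) (tr_lu f)) (tr_asc g (one' y) f) = tr_hc2 (tr_ru g) (vi f).
Proof.
  unfold tr_hc2, tr_lu, tr_asc, tr_ru. vsimp. rewrite vc_hc2_merge. vsimp. rewrite hc2_vcr. vsimp.
  rewrite <- (vc_rw22 _ _ _ _ (asc_natural (vi g) (vinv (one_iso y)) (vi f))).
  rewrite (vc_rw21 _ _ _ (triangle _ L _ _ _ g f)), !hc2_vcl. vsimp. reflexivity.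
Qed.

Lemma tr_ev_co (x y : b0 X) (f : b1 x y) :
  vc (tr_ru f) (vc (tr_hc2 (vi f) (tr_ev f))
    (vc (tr_asc f (inv' _ _ f) f) (tr_hc2 (tr_co f) (vi f)))) = tr_lu f.
Proof.
  unfold tr_hc2, tr_lu, tr_asc, tr_ru, tr_ev, tr_co. vsimp.
  rewrite vc_hc2_merge. vsimp. rewrite vc_hc2_merge. vsimp. rewrite vc_hc2_merge. vsimp.
  rewrite hc2_vcr, !hc2_vcl. vsimp.
  rewrite (vc_rw22 _ _ _ _ (asc_natural (vi f) (inv_iso _ _ f) (vi f))).
  rewrite (vc_hc2_merge (vi f) (vi f) (hc2 (inv_iso x y f) (vi f))
             (hc2 (vinv (inv_iso x y f)) (vi f))).
  rewrite <- hc2_vc. vsimp. rewrite !hc2_1. vsimp.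
  assert (ev_co_vc : forall e (d : b2 e _),
    vc (ru f) (vc (hc2 (vi f) (ev f)) (vc (asc f (inv f) f) (vc (hc2 (co f) (vi f)) d)))
    = vc (lu f) d).
  { intros. rewrite <- (ev_co _ L _ _ f). vsimp. reflexivity. }
  rewrite ev_co_vc. reflexivity.
Qed.

Lemma tr_pentagon (v w x y z : b0 X) (k : b1 y z) (h : b1 x y) (g : b1 w x) (f : b1 v w) :
  vc (tr_asc k h (comp' _ _ _ g f)) (tr_asc (comp' _ _ _ k h) g f)
  = vc (tr_hc2 (vi k) (tr_asc h g f))
      (vc (tr_asc k (comp' _ _ _ h g) f) (tr_hc2 (tr_asc k h g) (vi f))).
Proof.
  unfold tr_hc2, tr_asc. vsimp. symmetry.
  rewrite vc_hc2_merge. vsimp. rewrite vc_hc2_merge. vsimp. rewrite !hc2_vcr, !hc2_vcl. vsimp.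
  rewrite (vc_rw22 _ _ _ _ (asc_natural (vi k) (comp_iso _ _ _ h g) (vi f))).
  assert (cancel : forall e (d : b2 e _),
    vc (hc2 (vi k) (hc2 (vinv (comp_iso _ _ _ h g)) (vi f)))
       (vc (hc2 (vi k) (hc2 (comp_iso _ _ _ h g) (vi f))) d) = d).
  { intros. rewrite vc_hc2_merge, <- hc2_vc, vcVl, !vc1l, !hc2_1, vc1l. reflexivity. }
  rewrite cancel.
  assert (pentagon_vc : forall e (d : b2 e _),
    vc (hc2 (vi k) (asc h g f)) (vc (asc k (hc h g) f) (vc (hc2 (asc k h g) (vi f)) d))
    = vc (asc k h (hc g f)) (vc (asc (hc k h) g f) d)).
  { intros. rewrite !vcA, (pentagon _ L). vsimp. reflexivity. }
  rewrite pentagon_vc.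
  symmetry.
  rewrite (vc_rw22 _ _ _ _ (whisker_comm (vinv (comp_iso _ _ _ k h)) (comp_iso _ _ _ g f))).
  rewrite <- (hc2_1 k h), (vc_rw22 _ _ _ _ (asc_natural (vi k) (vi h) (comp_iso _ _ _ g f))).
  rewrite <- (hc2_1 g f), <- (vc_rw22 _ _ _ _ (asc_natural (vinv (comp_iso _ _ _ k h)) (vi g) (vi f))).
  reflexivity.
Qed.

Lemma transport_bg_laws : BgLaws transport_bg.
Proof.
  constructor; simpl; intros; unfold tr_hc2, tr_inv2, tr_lu, tr_ru, tr_ev, tr_co.
  - apply vcA.
  - apply vc1l.
  - apply vc1r.
  - apply vcVl.
  - apply vcVr.
  - vsimp. rewrite vc_hc2_merge. reflexivity.
  - rewrite hc2_1. vsimp. reflexivity.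
  - rewrite inv2_vc. vsimp. reflexivity.
  - rewrite inv2_1. vsimp. reflexivity.
  - apply tr_asc_natural.
  - vsimp. rewrite vc_hc2_merge. vsimp.
    rewrite (hc2_split (vinv (one_iso y)) a). vsimp.
    rewrite (vc_rw22 _ _ _ _ (lu_natural _)). reflexivity.
  - vsimp. rewrite vc_hc2_merge. vsimp.
    rewrite (hc2_split' a (vinv (one_iso x))). vsimp.
    rewrite (vc_rw22 _ _ _ _ (ru_natural _)). reflexivity.
  - vsimp. rewrite vc_hc2_merge. vsimp. rewrite hc2_vcl. vsimp.
    rewrite (vc_rw21 _ _ _ (ev_natural _)). reflexivity.
  - vsimp. rewrite vc_hc2_merge. vsimp. rewrite hc2_vcr'. vsimp.
    rewrite (vc_rw21 _ _ _ (co_natural _)). reflexivity.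
  - apply tr_pentagon.
  - apply tr_triangle.
  - apply tr_ev_co.
Qed.

Context {C : BgData} `{LC : BgLaws C}.

Definition transport_from (M : MorData X C) : MorData transport_bg C :=
  Build_MorData transport_bg C (F0 M) (fun x y f => F1 M f) (fun x y f g a => F2 M a)
    (fun x y z g f => vc (F2 M (comp_iso _ _ _ g f)) (ph2 M g f))
    (fun x => vc (F2 M (one_iso x)) (ph0 M x))
    (fun x y f => vc (F2 M (inv_iso _ _ f)) (ph1 M f)).

Lemma transport_from_laws (M : MorData X C) `{LM : MorLaws X C M} : MorLaws (transport_from M).
Proof.
  constructor; simpl; intros; unfold tr_hc2, tr_inv2, tr_asc, tr_lu, tr_ru, tr_ev, tr_co;
    rewrite ?F2_vc, ?F2_vinv by assumption; vsimp.
  - reflexivity.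
  - apply F2_1; assumption.
  - rewrite ph2_natural by assumption. reflexivity.
  - rewrite ph1_natural by assumption. reflexivity.
  - rewrite (vc_rw22 _ _ _ _ (ph2_natural _ _ _)), F2_vinv, F2_1 by assumption.
    rewrite <- hc2_vc. vsimp. rewrite (mor_asc _ LM). vsimp.
    rewrite (vc_rw22 _ _ _ _ (ph2_natural _ _ _)), ?F2_vinv, F2_1 by assumption.
    rewrite vc_hc2_merge. vsimp. reflexivity.
  - rewrite (vc_rw22 _ _ _ _ (ph2_natural _ _ _)), ?F2_vinv, F2_1 by assumption.
    rewrite <- hc2_vc. vsimp. apply (mor_ru _ LM).
  - rewrite (vc_rw22 _ _ _ _ (ph2_natural _ _ _)), ?F2_vinv, F2_1 by assumption.
    rewrite <- hc2_vc. vsimp. apply (mor_lu _ LM).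
  - rewrite (vc_rw22 _ _ _ _ (ph2_natural _ _ _)), ?F2_vinv, F2_1 by assumption.
    rewrite <- hc2_vc. vsimp. rewrite (mor_ev _ LM). vsimp. reflexivity.
  - rewrite (mor_co _ LM). vsimp.
    rewrite (vc_rw22 _ _ _ _ (ph2_natural _ _ _)), ?F2_vinv, F2_1 by assumption.
    rewrite vc_hc2_merge. vsimp. reflexivity.
Qed.

Context {Z : BgData}.

Definition transport_into (K : MorData Z X) : MorData Z transport_bg :=
  Build_MorData Z transport_bg (F0 K) (fun x y f => F1 K f) (fun x y f g a => F2 K a)
    (fun x y z g f => vc (ph2 K g f) (vinv (comp_iso _ _ _ (F1 K g) (F1 K f))))
    (fun x => vc (ph0 K x) (vinv (one_iso _)))
    (fun x y f => vc (ph1 K f) (vinv (inv_iso _ _ (F1 K f)))).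

Lemma transport_into_laws (K : MorData Z X) `{LK : MorLaws Z X K} : MorLaws (transport_into K).
Proof.
  constructor; simpl; intros; unfold tr_hc2, tr_inv2, tr_asc, tr_lu, tr_ru, tr_ev, tr_co; vsimp.
  - apply (F2_comp _ LK).
  - apply (F2_id _ LK).
  - rewrite (vc_rw22 _ _ _ _ (ph2_nat _ LK _ _ _ _ _ _ _ b a)). reflexivity.
  - rewrite (vc_rw22 _ _ _ _ (ph1_nat _ LK _ _ _ _ a)). reflexivity.
  - rewrite hc2_vcl. vsimp.
    rewrite (vc_rw31 _ _ _ _ (mor_asc _ LK _ _ _ _ h g f)). vsimp.
    rewrite vc_hc2_merge. vsimp. reflexivity.
  - rewrite hc2_vcr. vsimp. rewrite (vc_rw31 _ _ _ _ (mor_ru _ LK _ _ f)). reflexivity.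
  - rewrite hc2_vcl. vsimp. rewrite (vc_rw31 _ _ _ _ (mor_lu _ LK _ _ f)). reflexivity.
  - rewrite hc2_vcl. vsimp. rewrite (vc_rw31 _ _ _ _ (mor_ev _ LK _ _ f)). vsimp. reflexivity.
  - rewrite (vc_rw21 _ _ _ (mor_co _ LK _ _ f)). vsimp. rewrite vc_hc2_merge. vsimp. reflexivity.
Qed.

End Transport.

Ltac mor_field L := first [ apply (F2_comp _ L) | apply (F2_id _ L) | apply (ph2_nat _ L)
  | apply (ph1_nat _ L) | apply (mor_asc _ L) | apply (mor_ru _ L) | apply (mor_lu _ L)
  | apply (mor_ev _ L) | apply (mor_co _ L) ].

#[export] Existing Instance transport_bg_laws.
#[export] Existing Instance transport_from_laws.

Section Product.
Context {B D : BgData}.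

Definition prod_bg : BgData :=
  Build_BgData (b0 B * b0 D)
    (fun p q => (b1 (fst p) (fst q) * b1 (snd p) (snd q))%type)
    (fun p q u v => (b2 (fst u) (fst v) * b2 (snd u) (snd v))%type)
    (fun p q u v w b a => (vc (fst b) (fst a), vc (snd b) (snd a)))
    (fun p q u => (vi (fst u), vi (snd u)))
    (fun p q u v a => (vinv (fst a), vinv (snd a)))
    (fun p q r g f => (hc (fst g) (fst f), hc (snd g) (snd f)))
    (fun p q r g g' f f' b a => (hc2 (fst b) (fst a), hc2 (snd b) (snd a)))
    (fun p => (one (fst p), one (snd p)))
    (fun p q f => (inv (fst f), inv (snd f)))
    (fun p q f g a => (inv2 (fst a), inv2 (snd a)))
    (fun p q r s h g f => (asc (fst h) (fst g) (fst f), asc (snd h) (snd g) (snd f)))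
    (fun p q f => (lu (fst f), lu (snd f)))
    (fun p q f => (ru (fst f), ru (snd f)))
    (fun p q f => (ev (fst f), ev (snd f)))
    (fun p q f => (co (fst f), co (snd f))).

Definition proj1_mor : MorData prod_bg B :=
  Build_MorData prod_bg B (fun p => fst p) (fun p q u => fst u) (fun p q u v a => fst a)
    (fun p q r g f => vi (hc (fst g) (fst f))) (fun p => vi (one (fst p)))
    (fun p q f => vi (inv (fst f))).
Definition proj2_mor : MorData prod_bg D :=
  Build_MorData prod_bg D (fun p => snd p) (fun p q u => snd u) (fun p q u v a => snd a)
    (fun p q r g f => vi (hc (snd g) (snd f))) (fun p => vi (one (snd p)))
    (fun p q f => vi (inv (snd f))).

Definition pair_mor {Z : BgData} (R : MorData Z B) (P : MorData Z D) : MorData Z prod_bg :=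
  Build_MorData Z prod_bg (fun x => (F0 R x, F0 P x)) (fun x y f => (F1 R f, F1 P f))
    (fun x y f g a => (F2 R a, F2 P a)) (fun x y z g f => (ph2 R g f, ph2 P g f))
    (fun x => (ph0 R x, ph0 P x)) (fun x y f => (ph1 R f, ph1 P f)).

(* [M o pr1] and [N o pr2] with identities, rather than [F2 M (vi _)], composed into
   their coherence cells. *)
Definition fst_then {C : BgData} (M : MorData B C) : MorData prod_bg C :=
  Build_MorData prod_bg C (fun p => F0 M (fst p)) (fun p q u => F1 M (fst u))
    (fun p q u v a => F2 M (fst a)) (fun p q r g f => ph2 M (fst g) (fst f))
    (fun p => ph0 M (fst p)) (fun p q f => ph1 M (fst f)).
Definition snd_then {C : BgData} (N : MorData D C) : MorData prod_bg C :=
  Build_MorData prod_bg C (fun p => F0 N (snd p)) (fun p q u => F1 N (snd u))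
    (fun p q u v a => F2 N (snd a)) (fun p q r g f => ph2 N (snd g) (snd f))
    (fun p => ph0 N (snd p)) (fun p q f => ph1 N (snd f)).

Ltac destruct_pairs := repeat match goal with p : prod _ _ |- _ => destruct p end.

Context `{LB : BgLaws B} `{LD : BgLaws D}.

Ltac pair_field law := intros; cbn in *; destruct_pairs; simpl; f_equal;
  first [ apply (law _ LB) | apply (law _ LD) ].

Lemma prod_bg_laws : BgLaws prod_bg.
Proof.
  constructor.
  - pair_field vc_assoc. - pair_field vc_idl. - pair_field vc_idr. - pair_field vinv_l.
  - pair_field vinv_r. - pair_field hc2_comp. - pair_field hc2_id. - pair_field inv2_comp.
  - pair_field inv2_id. - pair_field asc_nat. - pair_field lu_nat. - pair_field ru_nat.
  - pair_field ev_nat. - pair_field co_nat. - pair_field pentagon. - pair_field triangle.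
  - pair_field ev_co.
Qed.

Lemma proj1_mor_laws : MorLaws proj1_mor.
Proof. constructor; intros; simpl; rewrite ?hc2_1; vsimp; reflexivity. Qed.
Lemma proj2_mor_laws : MorLaws proj2_mor.
Proof. constructor; intros; simpl; rewrite ?hc2_1; vsimp; reflexivity. Qed.

Lemma pair_mor_laws {Z : BgData} (R : MorData Z B) (P : MorData Z D)
  `{LR : MorLaws _ _ R} `{LP : MorLaws _ _ P} : MorLaws (pair_mor R P).
Proof.
  constructor; intros; simpl; f_equal.
  all: first [ apply (F2_comp _ LR) | apply (F2_comp _ LP) | apply (F2_id _ LR) | apply (F2_id _ LP)
    | apply (ph2_nat _ LR) | apply (ph2_nat _ LP) | apply (ph1_nat _ LR) | apply (ph1_nat _ LP)
    | apply (mor_asc _ LR) | apply (mor_asc _ LP) | apply (mor_ru _ LR) | apply (mor_ru _ LP)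
    | apply (mor_lu _ LR) | apply (mor_lu _ LP) | apply (mor_ev _ LR) | apply (mor_ev _ LP)
    | apply (mor_co _ LR) | apply (mor_co _ LP) ].
Qed.

Lemma fst_then_laws {C : BgData} (M : MorData B C) `{LM : MorLaws _ _ M} : MorLaws (fst_then M).
Proof. constructor; intros; simpl; mor_field LM. Qed.
Lemma snd_then_laws {C : BgData} (N : MorData D C) `{LN : MorLaws _ _ N} : MorLaws (snd_then N).
Proof. constructor; intros; simpl; mor_field LN. Qed.

End Product.

#[export] Existing Instance prod_bg_laws.
#[export] Existing Instance fst_then_laws.
#[export] Existing Instance snd_then_laws.

Section Equalizer.
Context {Y C : BgData} (M N : MorData Y C).

Definition agree0 (x : b0 Y) : Prop := F0 M x = F0 N x.
Definition agree1 {x y : b0 Y} (f : b1 x y) : Prop := heq1 (F1 M f) (F1 N f).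
Definition agree2 {x y : b0 Y} {f g : b1 x y} (a : b2 f g) : Prop := heq2 (F2 M a) (F2 N a).

Hypothesis agree_ph2 :
  forall x y z (g : b1 y z) (f : b1 x y), agree1 g -> agree1 f -> heq2 (ph2 M g f) (ph2 N g f).
Hypothesis agree_ph0 : forall x, agree0 x -> heq2 (ph0 M x) (ph0 N x).
Hypothesis agree_ph1 : forall x y (f : b1 x y), agree1 f -> heq2 (ph1 M f) (ph1 N f).

Context `{LY : BgLaws Y} `{LC : BgLaws C} `{LM : MorLaws _ _ M} `{LN : MorLaws _ _ N}.

Lemma agree1_src {x y : b0 Y} (f : b1 x y) : agree1 f -> agree0 x.
Proof. apply heq1_src. Qed.
Lemma agree1_tgt {x y : b0 Y} (f : b1 x y) : agree1 f -> agree0 y.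
Proof. apply heq1_tgt. Qed.

Lemma agree1_hc {x y z} (g : b1 y z) (f : b1 x y) : agree1 g -> agree1 f -> agree1 (hc g f).
Proof. intros. eapply heq2_tgt, agree_ph2; assumption. Qed.
Lemma agree1_one x : agree0 x -> agree1 (one x).
Proof. intros. eapply heq2_tgt, agree_ph0; assumption. Qed.
Lemma agree1_inv {x y} (f : b1 x y) : agree1 f -> agree1 (inv f).
Proof. intros. eapply heq2_tgt, agree_ph1; assumption. Qed.

Lemma agree2_vc {x y} {f g h : b1 x y} (b : b2 g h) (a : b2 f g) :
  agree2 b -> agree2 a -> agree2 (vc b a).
Proof. unfold agree2; intros. rewrite !F2_vc by assumption. apply heq2_vc; assumption. Qed.
Lemma agree2_vi {x y} (f : b1 x y) : agree1 f -> agree2 (vi f).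
Proof. unfold agree2; intros. rewrite !F2_1 by assumption. apply heq2_vi; assumption. Qed.
Lemma agree2_vinv {x y} {f g : b1 x y} (a : b2 f g) : agree2 a -> agree2 (vinv a).
Proof. unfold agree2; intros. rewrite !F2_vinv by assumption. apply heq2_vinv; assumption. Qed.

Ltac heq2_congr := repeat first [ apply heq2_vc | apply heq2_vinv | apply heq2_hc2
  | apply heq2_inv2 | apply heq2_vi | apply heq2_asc | apply heq2_lu | apply heq2_ru
  | apply heq2_ev | apply heq2_co | apply agree_ph2 | apply agree_ph0 | apply agree_ph1 ].

Lemma agree2_hc2 {x y z} {g g' : b1 y z} {f f' : b1 x y} (b : b2 g g') (a : b2 f f') :
  agree1 g -> agree1 g' -> agree1 f -> agree1 f' -> agree2 b -> agree2 a -> agree2 (hc2 b a).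
Proof. unfold agree2; intros. rewrite !F2_hc2 by assumption. heq2_congr; assumption. Qed.
Lemma agree2_inv2 {x y} {f g : b1 x y} (a : b2 f g) :
  agree1 f -> agree1 g -> agree2 a -> agree2 (inv2 a).
Proof. unfold agree2; intros. rewrite !F2_inv2 by assumption. heq2_congr; assumption. Qed.
Lemma agree2_asc {w x y z} (h : b1 y z) (g : b1 x y) (f : b1 w x) :
  agree1 h -> agree1 g -> agree1 f -> agree2 (asc h g f).
Proof. unfold agree2; intros. rewrite !F2_asc by assumption. heq2_congr; auto using agree1_hc. Qed.
Lemma agree2_lu {x y} (f : b1 x y) : agree1 f -> agree2 (lu f).
Proof.
  unfold agree2; intros. rewrite !F2_lu by assumption.
  heq2_congr; eauto using agree1_one, agree1_tgt.
Qed.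
Lemma agree2_ru {x y} (f : b1 x y) : agree1 f -> agree2 (ru f).
Proof.
  unfold agree2; intros. rewrite !F2_ru by assumption.
  heq2_congr; eauto using agree1_one, agree1_src.
Qed.
Lemma agree2_ev {x y} (f : b1 x y) : agree1 f -> agree2 (ev f).
Proof.
  unfold agree2; intros. rewrite !F2_ev by assumption.
  heq2_congr; eauto using agree1_inv, agree1_src.
Qed.
Lemma agree2_co {x y} (f : b1 x y) : agree1 f -> agree2 (co f).
Proof.
  unfold agree2; intros. rewrite !F2_co by assumption.
  heq2_congr; eauto using agree1_inv, agree1_tgt.
Qed.

Definition equalizer_bg : BgData :=
  Build_BgData {x : b0 Y | agree0 x}
    (fun p q => {f : b1 (proj1_sig p) (proj1_sig q) | agree1 f})
    (fun p q u v => {a : b2 (proj1_sig u) (proj1_sig v) | agree2 a})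
    (fun p q u v w b a => exist _ (vc (proj1_sig b) (proj1_sig a))
        (agree2_vc _ _ (proj2_sig b) (proj2_sig a)))
    (fun p q u => exist _ (vi (proj1_sig u)) (agree2_vi _ (proj2_sig u)))
    (fun p q u v a => exist _ (vinv (proj1_sig a)) (agree2_vinv _ (proj2_sig a)))
    (fun p q r g f => exist _ (hc (proj1_sig g) (proj1_sig f))
        (agree1_hc _ _ (proj2_sig g) (proj2_sig f)))
    (fun p q r g g' f f' b a => exist _ (hc2 (proj1_sig b) (proj1_sig a))
        (agree2_hc2 _ _ (proj2_sig g) (proj2_sig g') (proj2_sig f) (proj2_sig f')
           (proj2_sig b) (proj2_sig a)))
    (fun p => exist _ (one (proj1_sig p)) (agree1_one _ (proj2_sig p)))
    (fun p q f => exist _ (inv (proj1_sig f)) (agree1_inv _ (proj2_sig f)))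
    (fun p q f g a => exist _ (inv2 (proj1_sig a))
        (agree2_inv2 _ (proj2_sig f) (proj2_sig g) (proj2_sig a)))
    (fun p q r s h g f => exist _ (asc (proj1_sig h) (proj1_sig g) (proj1_sig f))
        (agree2_asc _ _ _ (proj2_sig h) (proj2_sig g) (proj2_sig f)))
    (fun p q f => exist _ (lu (proj1_sig f)) (agree2_lu _ (proj2_sig f)))
    (fun p q f => exist _ (ru (proj1_sig f)) (agree2_ru _ (proj2_sig f)))
    (fun p q f => exist _ (ev (proj1_sig f)) (agree2_ev _ (proj2_sig f)))
    (fun p q f => exist _ (co (proj1_sig f)) (agree2_co _ (proj2_sig f))).

Ltac destruct_sigs := repeat match goal with p : sig _ |- _ => destruct p end.
Ltac bg_field law := intros; cbn in *; destruct_sigs; simpl; apply subset_eq_compat; apply (law _ LY).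

Lemma equalizer_bg_laws : BgLaws equalizer_bg.
Proof.
  constructor.
  - bg_field vc_assoc. - bg_field vc_idl. - bg_field vc_idr. - bg_field vinv_l.
  - bg_field vinv_r. - bg_field hc2_comp. - bg_field hc2_id. - bg_field inv2_comp.
  - bg_field inv2_id. - bg_field asc_nat. - bg_field lu_nat. - bg_field ru_nat.
  - bg_field ev_nat. - bg_field co_nat. - bg_field pentagon. - bg_field triangle.
  - bg_field ev_co.
Qed.

Definition restrict_mor {Z : BgData} (K : MorData Y Z) : MorData equalizer_bg Z :=
  Build_MorData equalizer_bg Z (fun p => F0 K (proj1_sig p)) (fun p q u => F1 K (proj1_sig u))
    (fun p q u v a => F2 K (proj1_sig a))
    (fun p q r g f => ph2 K (proj1_sig g) (proj1_sig f))
    (fun p => ph0 K (proj1_sig p)) (fun p q f => ph1 K (proj1_sig f)).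

Lemma restrict_mor_laws {Z : BgData} (K : MorData Y Z) `{LK : MorLaws _ _ K} :
  MorLaws (restrict_mor K).
Proof. constructor; intros; cbn in *; destruct_sigs; simpl; mor_field LK. Qed.

Section Corestriction.
Context {W : BgData} (K : MorData W Y)
  (h0 : forall x, agree0 (F0 K x))
  (h1 : forall x y (f : b1 x y), agree1 (F1 K f))
  (h2 : forall x y (f g : b1 x y) (a : b2 f g), agree2 (F2 K a))
  (h3 : forall x y z (g : b1 y z) (f : b1 x y), agree2 (ph2 K g f))
  (h4 : forall x, agree2 (ph0 K x))
  (h5 : forall x y (f : b1 x y), agree2 (ph1 K f)).

Definition corestrict_mor : MorData W equalizer_bg :=
  Build_MorData W equalizer_bg (fun x => exist _ (F0 K x) (h0 x))
    (fun x y f => exist _ (F1 K f) (h1 _ _ f))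
    (fun x y f g a => exist _ (F2 K a) (h2 _ _ _ _ a))
    (fun x y z g f => exist _ (ph2 K g f) (h3 _ _ _ g f))
    (fun x => exist _ (ph0 K x) (h4 x)) (fun x y f => exist _ (ph1 K f) (h5 _ _ f)).

Lemma corestrict_mor_laws `{LK : MorLaws _ _ K} : MorLaws corestrict_mor.
Proof. constructor; intros; simpl; apply subset_eq_compat; mor_field LK. Qed.

End Corestriction.
End Equalizer.

Section EqualizerInTransportedProduct.
Context {B D C : BgData} `{LB : BgLaws B} `{LD : BgLaws D} `{LC : BgLaws C}.
Variable comp' : forall x y z : b0 (@prod_bg B D), b1 y z -> b1 x y -> b1 x z.
Variable comp_iso :
  forall (x y z : b0 prod_bg) (g : b1 y z) (f : b1 x y), b2 (hc g f) (comp' x y z g f).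
Variable one' : forall x : b0 (@prod_bg B D), b1 x x.
Variable one_iso : forall x : b0 prod_bg, b2 (one x) (one' x).
Variable inv' : forall x y : b0 (@prod_bg B D), b1 x y -> b1 y x.
Variable inv_iso : forall (x y : b0 prod_bg) (f : b1 x y), b2 (inv f) (inv' x y f).

Local Notation T := (transport_bg comp' comp_iso one' one_iso inv' inv_iso).
Local Notation tr_from := (transport_from comp' comp_iso one' one_iso inv' inv_iso).

Variables M N : MorData T C.
Context `{LM : MorLaws _ _ M} `{LN : MorLaws _ _ N}.
Hypothesis agree_ph2 : forall x y z (g : b1 y z) (f : b1 x y),
  agree1 M N g -> agree1 M N f -> heq2 (ph2 M g f) (ph2 N g f).
Hypothesis agree_ph0 : forall x, agree0 M N x -> heq2 (ph0 M x) (ph0 N x).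
Hypothesis agree_ph1 : forall x y (f : b1 x y), agree1 M N f -> heq2 (ph1 M f) (ph1 N f).

Local Notation restrict := (restrict_mor M N agree_ph2 agree_ph0 agree_ph1).

Lemma equalizer_projections_jointly_monic {W : BgData}
  (H H' : MorData W (equalizer_bg M N agree_ph2 agree_ph0 agree_ph1)) :
  mcomp (restrict (tr_from proj1_mor)) H = mcomp (restrict (tr_from proj1_mor)) H' ->
  mcomp (restrict (tr_from proj2_mor)) H = mcomp (restrict (tr_from proj2_mor)) H' -> H = H'.
Proof.
  intros E1 E2.
  destruct (mor_eq_heq _ _ E1) as [a0 [a1 [a2 [a3 [a4 a5]]]]].
  destruct (mor_eq_heq _ _ E2) as [b0' [b1' [b2' [b3' [b4' b5']]]]].
  clear E1 E2.
  destruct H as [h0 h1 h2 q2 q0 q1], H' as [h0' h1' h2' q2' q0' q1'].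
  assert (h0 = h0').
  { extensionality x. apply sig_ext, injective_projections; [exact (a0 x) | exact (b0' x)]. }
  subst h0'.
  assert (h1 = h1').
  { extensionality x; extensionality y; extensionality f.
    apply sig_ext, injective_projections; apply heq1_eq;
      [exact (a1 x y f) | exact (b1' x y f)]. }
  subst h1'.
  assert (h2 = h2').
  { extensionality x; extensionality y; extensionality f; extensionality g; extensionality a.
    apply sig_ext, injective_projections; apply heq2_eq;
      [exact (a2 x y f g a) | exact (b2' x y f g a)]. }
  subst h2'.
  assert (q2 = q2').
  { extensionality x; extensionality y; extensionality z; extensionality g; extensionality f.
    apply sig_ext, injective_projections; eapply vc_cancel_r, heq2_eq;
      [exact (a3 x y z g f) | exact (b3' x y z g f)]. }
  subst q2'.
  assert (q0 = q0').
  { extensionality x.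
    apply sig_ext, injective_projections; eapply vc_cancel_r, heq2_eq;
      [exact (a4 x) | exact (b4' x)]. }
  subst q0'.
  assert (q1 = q1').
  { extensionality x; extensionality y; extensionality f.
    apply sig_ext, injective_projections; eapply vc_cancel_r, heq2_eq;
      [exact (a5 x y f) | exact (b5' x y f)]. }
  subst q1'.
  reflexivity.
Qed.

End EqualizerInTransportedProduct.

Definition choice2 {T : Type} {U : T -> Type} {P : forall t, U t -> Prop}
  (H : exists t (u : U t), P t u) : {t : T & {u : U t | P t u}} :=
  let (t, Ht) := constructive_indefinite_description _ H in
  existT _ t (constructive_indefinite_description _ Ht).

Section Pullback.
Context {B C D : BgData} `{LB : BgLaws B} `{LC : BgLaws C} `{LD : BgLaws D}
  (F : MorData B C) `{LF : MorLaws _ _ F} (G : MorData D C) `{LG : MorLaws _ _ G}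
  (HF : is_fibration F).

Lemma fibration_lift {x y : b0 B} (a' : b1 x y) {s : b1 (F0 F x) (F0 F y)} (phi : b2 s (F1 F a'))
  {u v : b0 C} {s' t' : b1 u v} (gam : b2 s' t') :
  heq1 s s' -> exists (c : b1 x y) (r : b2 a' c), heq2 (vc (F2 F r) phi) gam.
Proof.
  intro H. destruct_heq1 H.
  destruct (proj2 HF x y a' t' (vc phi (vinv gam))) as [a [p [alpha Ha]]].
  subst t'. simpl in Ha.
  exists a, (vinv alpha). apply eq_heq2.
  rewrite F2_vinv, Ha, vinv_vc, vinvK by assumption. vsimp. reflexivity.
Qed.

(* Where [Q] fails the lift is irrelevant, as those cells are cut away by the equalizer. *)
Lemma fibration_lift_if (Q : Prop) {x y : b0 B} (a' : b1 x y) {s : b1 (F0 F x) (F0 F y)}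
  (phi : b2 s (F1 F a')) {u v : b0 C} {s' t' : b1 u v} (gam : b2 s' t') :
  (Q -> heq1 s s') -> exists (c : b1 x y) (r : b2 a' c), Q -> heq2 (vc (F2 F r) phi) gam.
Proof.
  intro Hs. destruct (classic Q) as [HQ | HnQ].
  - destruct (fibration_lift a' phi gam (Hs HQ)) as [c [r Hr]]. exists c, r. intros _. exact Hr.
  - exists a', (vi a'). intro HQ. contradiction.
Qed.

Local Notation PB := (@prod_bg B D).
Local Notation FP := (@fst_then B D C F).
Local Notation GP := (@snd_then B D C G).

Lemma comp_lift_ex (p q r : b0 PB) (g : b1 q r) (f : b1 p q) :
  exists (c : b1 (fst p) (fst r)) (i : b2 (hc (fst g) (fst f)) c),
    agree1 FP GP g /\ agree1 FP GP f ->
    heq2 (vc (F2 F i) (ph2 F (fst g) (fst f))) (ph2 G (snd g) (snd f)).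
Proof. apply fibration_lift_if. intros [Hg Hf]. apply heq1_hc; assumption. Qed.
Lemma one_lift_ex (p : b0 PB) :
  exists (c : b1 (fst p) (fst p)) (i : b2 (one (fst p)) c),
    agree0 FP GP p -> heq2 (vc (F2 F i) (ph0 F (fst p))) (ph0 G (snd p)).
Proof. apply fibration_lift_if, heq1_one. Qed.
Lemma inv_lift_ex (p q : b0 PB) (f : b1 p q) :
  exists (c : b1 (fst q) (fst p)) (i : b2 (inv (fst f)) c),
    agree1 FP GP f -> heq2 (vc (F2 F i) (ph1 F (fst f))) (ph1 G (snd f)).
Proof. apply fibration_lift_if, heq1_inv. Qed.

Definition lift_comp p q r g f : b1 (fst p) (fst r) := projT1 (choice2 (comp_lift_ex p q r g f)).
Definition lift_comp_iso p q r g f : b2 (hc (fst g) (fst f)) (lift_comp p q r g f) :=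
  proj1_sig (projT2 (choice2 (comp_lift_ex p q r g f))).
Lemma lift_comp_iso_spec (p q r : b0 PB) (g : b1 q r) (f : b1 p q) :
  agree1 FP GP g /\ agree1 FP GP f ->
  heq2 (vc (F2 F (lift_comp_iso p q r g f)) (ph2 F (fst g) (fst f))) (ph2 G (snd g) (snd f)).
Proof. exact (proj2_sig (projT2 (choice2 (comp_lift_ex p q r g f)))). Qed.

Definition lift_one p : b1 (fst p) (fst p) := projT1 (choice2 (one_lift_ex p)).
Definition lift_one_iso p : b2 (one (fst p)) (lift_one p) :=
  proj1_sig (projT2 (choice2 (one_lift_ex p))).
Lemma lift_one_iso_spec (p : b0 PB) :
  agree0 FP GP p -> heq2 (vc (F2 F (lift_one_iso p)) (ph0 F (fst p))) (ph0 G (snd p)).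
Proof. exact (proj2_sig (projT2 (choice2 (one_lift_ex p)))). Qed.

Definition lift_inv p q f : b1 (fst q) (fst p) := projT1 (choice2 (inv_lift_ex p q f)).
Definition lift_inv_iso p q f : b2 (inv (fst f)) (lift_inv p q f) :=
  proj1_sig (projT2 (choice2 (inv_lift_ex p q f))).
Lemma lift_inv_iso_spec (p q : b0 PB) (f : b1 p q) :
  agree1 FP GP f -> heq2 (vc (F2 F (lift_inv_iso p q f)) (ph1 F (fst f))) (ph1 G (snd f)).
Proof. exact (proj2_sig (projT2 (choice2 (inv_lift_ex p q f)))). Qed.

Definition pb_comp (p q r : b0 PB) (g : b1 q r) (f : b1 p q) : b1 p r :=
  (lift_comp p q r g f, hc (snd g) (snd f)).
Definition pb_comp_iso (p q r : b0 PB) (g : b1 q r) (f : b1 p q) :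
  b2 (hc g f) (pb_comp p q r g f) :=
  (lift_comp_iso p q r g f, vi (hc (snd g) (snd f))).
Definition pb_one (p : b0 PB) : b1 p p := (lift_one p, one (snd p)).
Definition pb_one_iso (p : b0 PB) : b2 (one p) (pb_one p) :=
  (lift_one_iso p, vi (one (snd p))).
Definition pb_inv (p q : b0 PB) (f : b1 p q) : b1 q p := (lift_inv p q f, inv (snd f)).
Definition pb_inv_iso (p q : b0 PB) (f : b1 p q) : b2 (inv f) (pb_inv p q f) :=
  (lift_inv_iso p q f, vi (inv (snd f))).

Local Notation tr_from := (transport_from pb_comp pb_comp_iso pb_one pb_one_iso pb_inv pb_inv_iso).
Local Notation tr_into := (transport_into pb_comp pb_comp_iso pb_one pb_one_iso pb_inv pb_inv_iso).

Lemma pb_agree_ph2 (p q r : b0 PB) (g : b1 q r) (f : b1 p q) :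
  agree1 (tr_from FP) (tr_from GP) g -> agree1 (tr_from FP) (tr_from GP) f ->
  heq2 (ph2 (tr_from FP) g f) (ph2 (tr_from GP) g f).
Proof.
  intros Hg Hf. simpl. rewrite F2_1, vc1l by assumption.
  exact (lift_comp_iso_spec p q r g f (conj Hg Hf)).
Qed.
Lemma pb_agree_ph0 (p : b0 PB) :
  agree0 (tr_from FP) (tr_from GP) p -> heq2 (ph0 (tr_from FP) p) (ph0 (tr_from GP) p).
Proof.
  intro Hp. simpl. rewrite F2_1, vc1l by assumption.
  exact (lift_one_iso_spec p Hp).
Qed.
Lemma pb_agree_ph1 (p q : b0 PB) (f : b1 p q) :
  agree1 (tr_from FP) (tr_from GP) f -> heq2 (ph1 (tr_from FP) f) (ph1 (tr_from GP) f).
Proof.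
  intro Hf. simpl. rewrite F2_1, vc1l by assumption.
  exact (lift_inv_iso_spec p q f Hf).
Qed.

Local Notation restrict :=
  (restrict_mor (tr_from FP) (tr_from GP) pb_agree_ph2 pb_agree_ph0 pb_agree_ph1).

Definition pb_bg : BgData :=
  equalizer_bg (tr_from FP) (tr_from GP) pb_agree_ph2 pb_agree_ph0 pb_agree_ph1.
Definition pb_pr1 : MorData pb_bg B := restrict (tr_from proj1_mor).
Definition pb_pr2 : MorData pb_bg D := restrict (tr_from proj2_mor).

Lemma pb_bg_laws : BgLaws pb_bg.
Proof. apply equalizer_bg_laws. Qed.
Lemma pb_pr1_laws : MorLaws pb_pr1.
Proof. apply restrict_mor_laws, transport_from_laws, proj1_mor_laws; exact _. Qed.
Lemma pb_pr2_laws : MorLaws pb_pr2.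
Proof. apply restrict_mor_laws, transport_from_laws, proj2_mor_laws; exact _. Qed.

Lemma pb_pr2_strict : strict pb_pr2.
Proof. split; [|split]; intros; exists eq_refl; simpl; apply vc1l. Qed.

Lemma pb_square : mcomp F pb_pr1 = mcomp G pb_pr2.
Proof.
  apply mor_ext; intros; simpl.
  - exact (proj2_sig x).
  - exact (proj2_sig f).
  - exact (proj2_sig a).
  - rewrite !vc1r, (F2_1 G), vc1l by assumption.
    exact (lift_comp_iso_spec _ _ _ _ _ (conj (proj2_sig g) (proj2_sig f))).
  - rewrite !vc1r, (F2_1 G), vc1l by assumption.
    exact (lift_one_iso_spec _ (proj2_sig x)).
  - rewrite !vc1r, (F2_1 G), vc1l by assumption.
    exact (lift_inv_iso_spec _ _ _ (proj2_sig f)).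
Qed.

Section Universality.
Context {X : BgData} (R' : MorData X B) (P' : MorData X D)
  `{LR : MorLaws _ _ R'} `{LP : MorLaws _ _ P'} (E : mcomp F R' = mcomp G P').

Local Notation K := (tr_into (pair_mor R' P')).
Local Notation agree0' := (agree0 (tr_from FP) (tr_from GP)).
Local Notation agree1' := (agree1 (tr_from FP) (tr_from GP)).
Local Notation agree2' := (agree2 (tr_from FP) (tr_from GP)).

Lemma mediator_agree0 x : agree0' (F0 K x).
Proof. apply (mor_eq_heq _ _ E). Qed.
Lemma mediator_agree1 x y (f : b1 x y) : agree1' (F1 K f).
Proof. apply (mor_eq_heq _ _ E). Qed.
Lemma mediator_agree2 x y (f g : b1 x y) (a : b2 f g) : agree2' (F2 K a).
Proof. apply (mor_eq_heq _ _ E). Qed.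

(* The coherence cells of [K] are those of [R'] corrected by the inverse lift, and the
   lift was chosen to turn the coherence cell of [F] into that of [G]. *)
Lemma mediator_agree_ph2 x y z (g : b1 y z) (f : b1 x y) : agree2' (ph2 K g f).
Proof.
  unfold agree2. simpl. rewrite F2_vc, F2_vinv by assumption.
  eapply heq2_rw.
  - eapply (heq2_vc_vinv (ph2 F (F1 R' g) (F1 R' f))); [apply (mor_eq_heq _ _ E) |].
    exact (lift_comp_iso_spec _ _ _ _ _ (conj (mediator_agree1 _ _ g) (mediator_agree1 _ _ f))).
  - simpl. rewrite vinv1, vc1r. vsimp. reflexivity.
Qed.
Lemma mediator_agree_ph0 x : agree2' (ph0 K x).
Proof.
  unfold agree2. simpl. rewrite F2_vc, F2_vinv by assumption.
  eapply heq2_rw.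
  - eapply (heq2_vc_vinv (ph0 F (F0 R' x))); [apply (mor_eq_heq _ _ E) |].
    exact (lift_one_iso_spec _ (mediator_agree0 x)).
  - simpl. rewrite vinv1, vc1r. vsimp. reflexivity.
Qed.
Lemma mediator_agree_ph1 x y (f : b1 x y) : agree2' (ph1 K f).
Proof.
  unfold agree2. simpl. rewrite F2_vc, F2_vinv by assumption.
  eapply heq2_rw.
  - eapply (heq2_vc_vinv (ph1 F (F1 R' f))); [apply (mor_eq_heq _ _ E) |].
    exact (lift_inv_iso_spec _ _ _ (mediator_agree1 _ _ f)).
  - simpl. rewrite vinv1, vc1r. vsimp. reflexivity.
Qed.

Definition pb_mediator : MorData X pb_bg :=
  corestrict_mor (tr_from FP) (tr_from GP) pb_agree_ph2 pb_agree_ph0 pb_agree_ph1 K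
    mediator_agree0 mediator_agree1 mediator_agree2
    mediator_agree_ph2 mediator_agree_ph0 mediator_agree_ph1.

Lemma pb_mediator_laws : MorLaws pb_mediator.
Proof. apply corestrict_mor_laws, transport_into_laws, pair_mor_laws; exact _. Qed.

Lemma pb_pr1_mediator : mcomp pb_pr1 pb_mediator = R'.
Proof. apply mor_ext; intros; simpl; try reflexivity; apply eq_heq2; vsimp; reflexivity. Qed.
Lemma pb_pr2_mediator : mcomp pb_pr2 pb_mediator = P'.
Proof.
  apply mor_ext; intros; simpl; try reflexivity; apply eq_heq2; rewrite ?vinv1; vsimp; reflexivity.
Qed.

Lemma pb_mediator_unique (H : MorData X pb_bg) :
  mcomp pb_pr1 H = R' -> mcomp pb_pr2 H = P' -> H = pb_mediator.
Proof.
  intros E1 E2. apply equalizer_projections_jointly_monic.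
  - exact (eq_trans E1 (eq_sym pb_pr1_mediator)).
  - exact (eq_trans E2 (eq_sym pb_pr2_mediator)).
Qed.

End Universality.

End Pullback.

Theorem lemma5p7 (B C D : Bigroupoid) (F : MorData B C) (G : MorData D C) :
  MorLaws F -> is_fibration F -> MorLaws G ->
  exists (A : Bigroupoid) (R : MorData A B) (P : MorData A D),
    MorLaws R /\ MorLaws P /\ strict P /\
    mcomp F R = mcomp G P /\
    (forall (X : Bigroupoid) (R' : MorData X B) (P' : MorData X D),
        MorLaws R' -> MorLaws P' -> mcomp F R' = mcomp G P' ->
        exists H : MorData X A,
          MorLaws H /\ mcomp R H = R' /\ mcomp P H = P' /\
          (forall H' : MorData X A,
              MorLaws H' -> mcomp R H' = R' -> mcomp P H' = P' -> H' = H)).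
Proof.
  intros LF HF LG.
  pose proof (blaws B) as LB; pose proof (blaws C) as LC; pose proof (blaws D) as LD.
  exists (Build_Bigroupoid (pb_bg F G HF) (pb_bg_laws F G HF)), (pb_pr1 F G HF), (pb_pr2 F G HF).
  split; [apply pb_pr1_laws |]. split; [apply pb_pr2_laws |].
  split; [apply pb_pr2_strict |]. split; [apply pb_square |].
  intros X R' P' LR LP E.
  exists (pb_mediator F G HF R' P' E).
  split; [exact (pb_mediator_laws F G HF R' P' E) |].
  split; [exact (pb_pr1_mediator F G HF R' P' E) |].
  split; [exact (pb_pr2_mediator F G HF R' P' E) |].
  intros H _ E1 E2. exact (pb_mediator_unique F G HF R' P' E H E1 E2).
Qed.
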